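(* Let $N=2^k$ for a positive integer $k$, let positive integers $N_s$ with $\sum_s N_s=N$ be given, and let $k_s=\lceil\lg N_s\rceil$. Consider any sAEDS with $|\mathcal X_s|=N_s$ such that, for each $s$, exactly $2^{k_s}-N_s$ states $x\in\mathcal X_s$ have $|\mathcal F^+_x|=2^{k-k_s+1}$ and the remaining $2N_s-2^{k_s}$ states have $|\mathcal F^+_x|=2^{k-k_s}$, each $\mathcal F^+_x$ being encoded by a fixed-length code of length $\lg|\mathcal F^+_x|$. Assume its state chain is irreducible, with stationary distribution $Q$. Then $$L\le H(p)+D(p\|q)+\sum_{s}p(s)\big(\nu_{N_s,\tilde Q_s}-\mu_{\mathrm{pi}}(N_s)\big)\le H(p)+D(p\|q)+\sum_s p(s)\nu_{N_s,\tilde Q_s},$$ where $0\le\mu_{\mathrm{pi}}(N_s)=k_s+1-2^{k_s}/N_s-\lg N_s\le\sigma$ with $\sigma=\lg\lg e+1-\lg e$, and $$0\le \nu_{N_s,\tilde Q_s}=\frac{2N_s-2^{k_s}}{N_s}-\sum_{x\in\check{\mathcal X}_s}\tilde Q_s(x)<\frac{2N_s-2^{k_s}}{N_s}\le1,$$ $\check{\mathcal X}_s$ being a set of $2N_s-2^{k_s}$ elements of $\mathcal X_s$ with the smallest values of $\tilde Q_s(x)$.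
   Context: Let $\mathcal S$ be a finite alphabet with $|\mathcal S|\ge 2$ and $p=\{p(s)\}$ a probability distribution with $p(s)>0$ for all $s$ (i.i.d. source). $\mathcal B=\{0,1\}^*$ (including the empty word), $l(\beta)$ the word length, $\lg=\log_2$. An AEDS with finite state set $\mathcal X$, $|\mathcal X|=N$, consists of maps $E_{\hat x}:\mathcal S\to\mathcal B$ and $F^-_{\hat x}:\mathcal S\to\mathcal X$ ($\hat x\in\mathcal X$) such that for every $x\in\mathcal X$ the words $E_{\hat x}(s)$ over all pairs $(\hat x,s)$ with $F^-_{\hat x}(s)=x$ are pairwise distinct and form a prefix-free set. The state chain is the Markov chain on $\mathcal X$ moving from $\hat x$ to $F^-_{\hat x}(s)$ with probability $p(s)$; for a stationary distribution $Q$ the average code length is $L=\sum_{\hat x}\sum_s p(s)Q(\hat x)l(E_{\hat x}(s))$. A state-divided AEDS (sAEDS) is an AEDS for which the sets $\mathcal X_s=\{F^-_{\hat x}(s):\hat x\in\mathcal X\}$ are pairwise disjoint with union $\mathcal X$; $N_s=|\mathcal X_s|$, $q(s)=N_s/N$. For $x\in\mathcal X_s$, $\mathcal F^+_x=\{\hat x: F^-_{\hat x}(s)=x\}$; for each $s$ these sets partition $\mathcal X$, and $\hat x\mapsto E_{\hat x}(s)$ is an injective prefix-free code on $\mathcal F^+_x$. For $x\in\mathcal X_s$, $\tilde Q_s(x)=\sum_{\hat x\in\mathcal F^+_x}Q(\hat x)$ (so $\tilde Q_s$ is a probability distribution on $\mathcal X_s$). $H(p)=-\sum_s p(s)\lg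 p(s)$, $D(p\|q)=\sum_s p(s)\lg(p(s)/q(s))$. *)

From HB Require Import structures.
From mathcomp Require Import all_boot all_order all_algebra.
From mathcomp Require Import all_classical all_reals all_analysis.
Set Implicit Arguments. Unset Strict Implicit. Unset Printing Implicit Defensive.
Import Order.TTheory GRing.Theory Num.Theory.
Local Open Scope ring_scope.

Definition lg {R : realType} (x : R) : R := ln x / ln 2.

Section AEDS.
Variables (R : realType) (S X : finType).

(* AEDS condition: for every state x, the words E_{xh}(s) over all pairs
   (xh, s) with F^-_{xh}(s) = x are pairwise distinct and prefix-free
   (no word is a prefix of the word of a different pair; this also
   excludes equal words for different pairs). *)
Definition is_AEDS (E : X -> S -> seq bool) (F : X -> S -> X) : Prop :=
  forall (a b : X) (s t : S), F a s = F b t -> (a, s) <> (b, t) ->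
    ~~ prefix (E a s) (E b t).

Definition Xs (F : X -> S -> X) (s : S) : {set X} := [set F xh s | xh : X].

Definition is_sAEDS (E : X -> S -> seq bool) (F : X -> S -> X) : Prop :=
  is_AEDS E F /\
  (forall s t, s != t -> [disjoint Xs F s & Xs F t]) /\
  \bigcup_(s : S) Xs F s = [set: X].

Definition Fplus (F : X -> S -> X) (s : S) (x : X) : {set X} :=
  [set xh | F xh s == x].

Definition trans (p : S -> R) (F : X -> S -> X) (xh y : X) : R :=
  \sum_(s | F xh s == y) p s.

Definition irreducible (p : S -> R) (F : X -> S -> X) : Prop :=
  forall x y : X, connect (fun a b => 0 < trans p F a b) x y.

Definition stationary (p : S -> R) (F : X -> S -> X) (Q : X -> R) : Prop :=
  (forall x, 0 <= Q x) /\ \sum_x Q x = 1 /\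
  (forall y, Q y = \sum_xh Q xh * trans p F xh y).

Definition avg_len (p : S -> R) (Q : X -> R) (E : X -> S -> seq bool) : R :=
  \sum_xh \sum_s p s * Q xh * (size (E xh s))%:R.

Definition entropy (p : S -> R) : R := - \sum_s p s * lg (p s).
Definition KLdiv (p q : S -> R) : R := \sum_s p s * lg (p s / q s).

Definition Qtilde (F : X -> S -> X) (Q : X -> R) (s : S) (x : X) : R :=
  \sum_(xh in Fplus F s x) Q xh.

Definition smallest_set (B : {set X}) (m : nat) (f : X -> R) (A : {set X}) : Prop :=
  A \subset B /\ #|A| = m /\
  (forall x y, x \in A -> y \in B :\: A -> f x <= f y).

Definition nu (n : nat) (A : {set X}) (Qt : X -> R) : R :=
  ((2 * n - 2 ^ up_log 2 n)%N)%:R / n%:R - \sum_(x in A) Qt x.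

End AEDS.

Definition kceil (n : nat) : nat := up_log 2 n.

Definition mu_pi {R : realType} (n : nat) : R :=
  (kceil n)%:R + 1 - (2 ^ kceil n)%N%:R / n%:R - lg (n%:R : R).

Definition sigma {R : realType} : R := lg (lg (expR (1 : R))) + 1 - lg (expR (1 : R)).

From HB Require Import structures.
From mathcomp Require Import all_boot all_order all_algebra.
From mathcomp Require Import all_classical all_reals all_analysis.
From mathcomp Require Import ring lra zify.
Import Order.TTheory GRing.Theory Num.Theory.
Set Implicit Arguments.
Unset Strict Implicit.
Unset Printing Implicit Defensive.
Local Open Scope ring_scope.

(* For each symbol s, the code used when s is emitted has length k - k_s + 1
   exactly on the 2^k_s - N_s "big" states of X_s and length k - k_s
   elsewhere, so its expected length is k - k_s + \tilde Q_s(big states).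
   The big states are the complement of a set of 2 N_s - 2^k_s states, whose
   \tilde Q_s-mass is at least that of the lightest such set; this gives
   k - k_s + 1 - \sum_{\check X_s} \tilde Q_s, and a little arithmetic turns
   the sum over s into H(p) + D(p||q) + \sum_s p(s) (nu_s - mu_pi(N_s)).
   With y = 2^k_s / N_s in [1, 2), mu_pi(N_s) = 1 - y + lg y, which is
   nonnegative by concavity of lg on [1, 2] and at most its maximum sigma,
   attained at y = lg e. *)

Section BinaryLogarithm.
Variable R : realType.

Lemma ln2_gt0 : 0 < ln (2 : R).
Proof. by apply: ln_gt0; rewrite ltr1n. Qed.

Lemma lg_div (x y : R) : 0 < x -> 0 < y -> lg (x / y) = lg x - lg y.
Proof. by move=> x0 y0; rewrite /lg ln_div ?posrE // mulrBl. Qed.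

Lemma lg_exp2n (n : nat) : lg ((2 ^ n)%N%:R : R) = n%:R.
Proof.
rewrite /lg natrX lnXn ?ltr0n //.
by rewrite -[_ *+ n]mulr_natl mulfK // gt_eqF // ln2_gt0.
Qed.

Lemma lg_ge_chord12 (y : R) : 1 <= y <= 2 -> y - 1 <= lg y.
Proof.
case/andP=> y1 y2; rewrite /lg ler_pdivlMr ?ln2_gt0 //.
have t0 : 0 <= 2 - y by rewrite subr_ge0.
have t1 : 2 - y <= 1 by lra.
have := @concave_ln R (Itv01 t0 t1) 1 2 ltr01 (ltr0Sn R 1).
rewrite !convRE /= ln1 mulr0 add0r /unstable.onem.
have -> : (2 - y) * 1 + (1 - (2 - y)) * 2 = y by lra.
by have -> : 1 - (2 - y) = y - 1 by lra.
Qed.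

(* Divide ln (y ln 2) <= y ln 2 - 1 by ln 2. *)
Lemma subr_lg_le_sigma (y : R) : 0 < y -> 1 - y + lg y <= sigma.
Proof.
move=> y0; have l2 := ln2_gt0.
rewrite /sigma /lg expRK div1r lnV ?posrE //.
have : ln (y * ln 2) <= y * ln 2 - 1.
  have := @le_ln1Dx R (y * ln 2 - 1); rewrite [1 + _]addrC subrK; apply.
  by have := mulr_gt0 y0 l2; lra.
rewrite lnM ?posrE // => hy.
have : (ln y - (y * ln 2 - 1 - ln (ln 2))) / ln 2 <= 0.
  by rewrite pmulr_lle0 ?invr_gt0 //; lra.
rewrite !mulrBl mulNr mulfK ?gt_eqF //; lra.
Qed.

End BinaryLogarithm.

Lemma kceil_bounds n : (0 < n)%N -> (n <= 2 ^ kceil n < 2 * n)%N.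
Proof.
move=> n0; rewrite up_logP //=.
case: (ltnP 1 n) => n1; last by have -> : n = 1%N by lia; rewrite /kceil up_log1.
have := up_log_gtn (ltnSn 1) n1.
have : (0 < kceil n)%N by rewrite /kceil up_log_gt0 n1.
by rewrite /kceil; case: (up_log 2 n) => // K _ /=; rewrite expnS; lia.
Qed.

Section MuPi.
Variable R : realType.

Lemma mu_piE n : (0 < n)%N ->
  mu_pi n = 1 - (2 ^ kceil n)%N%:R / n%:R + lg ((2 ^ kceil n)%N%:R / n%:R) :> R.
Proof.
move=> n0; rewrite /mu_pi lg_div ?ltr0n ?expn_gt0 // lg_exp2n; ring.
Qed.

Lemma mu_pi_bounds n : (0 < n)%N -> 0 <= mu_pi n :> R /\ mu_pi n <= sigma :> R.
Proof.
move=> n0; have /andP[b1 b2] := kceil_bounds n0.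
have nR : (0 : R) < n%:R by rewrite ltr0n.
rewrite mu_piE //; set y : R := _ / _.
have y1 : 1 <= y by rewrite ler_pdivlMr // mul1r ler_nat.
have y2 : y <= 2 by rewrite ler_pdivrMr // -natrM ler_nat; lia.
split; last by apply: subr_lg_le_sigma; lra.
by have := @lg_ge_chord12 R y; rewrite y1 y2 /=; lra.
Qed.

Lemma nu_sub_mu_pi (X : finType) n (A : {set X}) (f : X -> R) : (0 < n)%N ->
  nu n A f - mu_pi n = 1 + lg (n%:R : R) - (kceil n)%:R - \sum_(x in A) f x.
Proof.
move=> n0; have /andP[b1 b2] := kceil_bounds n0.
have nR : n%:R != 0 :> R by rewrite pnatr_eq0 -lt0n.
rewrite /nu /mu_pi -/(kceil n) natrB; last by lia.
by rewrite natrM mulrBl mulfK //; ring.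
Qed.

End MuPi.

Lemma entropyD_KLdiv (R : realType) (S : finType) (p q : S -> R) :
  (forall s, 0 < p s) -> (forall s, 0 < q s) ->
  entropy p + KLdiv p q = - \sum_s p s * lg (q s).
Proof.
move=> p0 q0; rewrite /entropy /KLdiv -sumrN -big_split -sumrN /=.
by apply: eq_bigr => s _; rewrite lg_div //; ring.
Qed.

Section SmallestSet.
Variables (R : realType) (X : finType) (f : X -> R).

Lemma sum_gt0_set (A : {set X}) x :
  x \in A -> (forall y, y \in A -> 0 < f y) -> 0 < \sum_(y in A) f y.
Proof.
move=> xA f0; rewrite (big_setD1 x) //=; apply: lt_le_trans (f0 x xA) _.
by rewrite lerDl; apply: sumr_ge0 => y /finset.setD1P[_ /f0 /ltW].
Qed.

Lemma card_mul_sum_le (U V : {set X}) :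
  (forall x y, x \in U -> y \in V -> f x <= f y) ->
  #|V|%:R * \sum_(x in U) f x <= #|U|%:R * \sum_(y in V) f y.
Proof.
move=> fUV.
have -> : #|V|%:R * \sum_(x in U) f x = \sum_(y in V) \sum_(x in U) f x.
  by rewrite sumr_const mulr_natl.
have -> : #|U|%:R * \sum_(y in V) f y = \sum_(y in V) \sum_(x in U) f y.
  by rewrite mulr_sumr; apply: eq_bigr => y _; rewrite sumr_const mulr_natl.
by apply: ler_sum => y yV; apply: ler_sum => x xU; apply: fUV.
Qed.

Lemma smallest_set_sum_le (B A D : {set X}) m :
  smallest_set B m f A -> D \subset B -> #|D| = m ->
  \sum_(x in A) f x <= \sum_(x in D) f x.
Proof.
move=> [_ [cA fA]] DB cD.
rewrite (big_setID D) [X in _ <= X](big_setID A) /= finset.setIC lerD2l.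
have cAD : #|A :\: D| = #|D :\: A|.
  by have := cardsID D A; have := cardsID A D; rewrite finset.setIC; lia.
have := @card_mul_sum_le (A :\: D) (D :\: A); rewrite cAD.
case: (posnP #|D :\: A|) => [c0 _ | c0].
  move: cAD; rewrite c0 => /cards0_eq ->.
  by rewrite (cards0_eq c0) !big_set0.
rewrite ler_pM2l ?ltr0n //; apply=> x y /finset.setDP[xA _] /finset.setDP[yD yA].
by apply: fA; rewrite // inE yA (fintype.subsetP DB).
Qed.

Lemma smallest_set_mean_le (B A : {set X}) m :
  smallest_set B m f A -> #|B|%:R * \sum_(x in A) f x <= m%:R * \sum_(x in B) f x.
Proof.
move=> [AB [<- fA]]; have := card_mul_sum_le fA.
rewrite [\sum_(x in B) _](big_setID A) /= (finset.setIidPr AB).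
have := cardsID A B; rewrite (finset.setIidPr AB) => <-.
rewrite natrD mulrDl mulrDr; lra.
Qed.

Lemma nu_bounds n (B A : {set X}) : (0 < n)%N -> #|B| = n ->
  (forall x, x \in B -> 0 < f x) -> \sum_(x in B) f x = 1 ->
  smallest_set B (2 * n - 2 ^ kceil n) f A ->
  [/\ 0 <= nu n A f, nu n A f < (2 * n - 2 ^ kceil n)%N%:R / n%:R
    & (2 * n - 2 ^ kceil n)%N%:R / n%:R <= 1 :> R].
Proof.
move=> n0 cB f0 f1 hA; have /andP[b1 b2] := kceil_bounds n0.
have nR : (0 : R) < n%:R by rewrite ltr0n.
have [AB [cA _]] := hA.
have [x xA] : exists x, x \in A by apply/card_gt0P; rewrite cA; lia.
have A0 : 0 < \sum_(x in A) f x.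
  by apply: sum_gt0_set xA _ => y /(fintype.subsetP AB)/f0.
have := smallest_set_mean_le hA; rewrite cB f1 mulr1 => mean.
rewrite /nu -/(kceil n); split.
- by rewrite subr_ge0 ler_pdivlMr // mulrC.
- by rewrite ltrBlDr ltrDl.
- by rewrite ler_pdivrMr // mul1r ler_nat; lia.
Qed.

End SmallestSet.

Section StateChain.
Variables (R : realType) (S X : finType) (p : S -> R) (F : X -> S -> X).

Lemma sum_Xs_Fplus s (g : X -> R) :
  \sum_(x in Xs F s) \sum_(xh in Fplus F s x) g xh = \sum_xh g xh.
Proof.
symmetry; rewrite (partition_big (fun xh => F xh s) (mem (Xs F s))) /=.
  by apply: eq_bigr => x _; apply: eq_bigl => xh; rewrite inE.
by move=> xh _; apply: imset_f.
Qed.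

Lemma sum_Qtilde_set (Q : X -> R) s (B : {set X}) : B \subset Xs F s ->
  \sum_(x in B) Qtilde F Q s x = \sum_xh Q xh * (F xh s \in B)%:R.
Proof.
move=> BX; rewrite -(sum_Xs_Fplus s (fun xh => Q xh * (F xh s \in B)%:R)).
rewrite big_mkcond [RHS]big_mkcond /=; apply: eq_bigr => x _.
case: ifP => [xB | xNB].
  rewrite (fintype.subsetP BX x xB); apply: eq_bigr => xh.
  by rewrite inE => /eqP ->; rewrite xB mulr1.
case: ifP => // _; rewrite big1 // => xh; rewrite inE => /eqP ->.
by rewrite xNB mulr0.
Qed.

Lemma stationary_gt0 (Q : X -> R) : (forall s, 0 < p s) ->
  irreducible p F -> stationary p F Q -> forall x, 0 < Q x.
Proof.
move=> p0 irrF [Q0 [Q1 QF]].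
have [x0 Qx0] : exists x0, 0 < Q x0.
  apply/existsP; apply: contraT; rewrite negb_exists => /forallP QN.
  have : \sum_x Q x <= 0 by apply: sumr_le0 => x _; rewrite leNgt QN.
  by rewrite Q1 ler10.
move=> y; have /connectP[path hpath ->] := irrF x0 y.
elim: path x0 Qx0 hpath => //= b path IH a Qa /andP[hab hpath]; apply: IH hpath.
rewrite QF; apply: lt_le_trans (mulr_gt0 Qa hab) _.
rewrite (bigD1 a) //= lerDl; apply: sumr_ge0 => xh _.
by apply: mulr_ge0 => //; apply: sumr_ge0 => s _; apply: ltW.
Qed.

Lemma Qtilde_gt0 (Q : X -> R) s x : (forall xh, 0 < Q xh) ->
  x \in Xs F s -> 0 < Qtilde F Q s x.
Proof.
by move=> Q0 /imsetP[xh _ ->]; apply: (sum_gt0_set (x := xh)); rewrite ?inE.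
Qed.

End StateChain.

Section SymbolCode.
Variables (R : realType) (S X : finType) (E : X -> S -> seq bool).
Variables (F : X -> S -> X) (Q : X -> R) (s : S) (a m : nat) (A : {set X}).

Let big_states := [set x in Xs F s | #|Fplus F s x| == (2 ^ (a + 1))%N].

Hypothesis Q1 : \sum_x Q x = 1.
Hypothesis code_len : forall xh, (2 ^ size (E xh s))%N = #|Fplus F s (F xh s)|.
Hypothesis two_sizes : forall x, x \in Xs F s ->
  #|Fplus F s x| = (2 ^ (a + 1))%N \/ #|Fplus F s x| = (2 ^ a)%N.
Hypothesis card_big_states : (#|big_states| + m)%N = #|Xs F s|.
Hypothesis A_smallest : smallest_set (Xs F s) m (Qtilde F Q s) A.

Lemma size_code xh : size (E xh s) = (a + (F xh s \in big_states))%N.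
Proof.
have xs : F xh s \in Xs F s by apply: imset_f.
have := code_len xh; rewrite /big_states inE xs /=.
case: (two_sizes xs) => ->; rewrite ?eqxx => /eqP; rewrite eqn_exp2l // => /eqP -> //.
by rewrite eqn_exp2l //; lia.
Qed.

Lemma expected_code_len_le :
  \sum_xh Q xh * (size (E xh s))%:R <= a%:R + 1 - \sum_(x in A) Qtilde F Q s x.
Proof.
have bigX : big_states \subset Xs F s by apply/fintype.subsetP => x; rewrite inE => /andP[].
have expected : \sum_xh Q xh * (size (E xh s))%:R
    = a%:R + \sum_(x in big_states) Qtilde F Q s x.
  under eq_bigr => xh _ do rewrite size_code natrD mulrDr.
  by rewrite big_split /= -mulr_suml Q1 mul1r sum_Qtilde_set.
have split1 : \sum_(x in big_states) Qtilde F Q s x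
    + \sum_(x in Xs F s :\: big_states) Qtilde F Q s x = 1.
  rewrite -Q1 -(sum_Xs_Fplus F s Q) [RHS](big_setID big_states) /=.
  by rewrite (finset.setIidPr bigX).
have light : \sum_(x in A) Qtilde F Q s x
    <= \sum_(x in Xs F s :\: big_states) Qtilde F Q s x.
  apply: smallest_set_sum_le A_smallest (finset.subsetDl _ _) _.
  by have := cardsID big_states (Xs F s); rewrite (finset.setIidPr bigX); lia.
by rewrite expected; lra.
Qed.

End SymbolCode.

Theorem theorem6 (R : realType) (S X : finType) (p : S -> R) (k : nat)
  (Ns : S -> nat) (E : X -> S -> seq bool) (F : X -> S -> X) (Q : X -> R)
  (Xc : S -> {set X}) :
  (1 < #|S|)%N ->
  (forall s, 0 < p s) -> \sum_s p s = 1 ->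
  (0 < k)%N -> #|X| = (2 ^ k)%N ->
  (forall s, 0 < Ns s)%N -> (\sum_s Ns s)%N = (2 ^ k)%N ->
  is_sAEDS E F ->
  (forall s, #|Xs F s| = Ns s) ->
  (forall s x, x \in Xs F s ->
     #|Fplus F s x| = (2 ^ (k - kceil (Ns s) + 1))%N \/
     #|Fplus F s x| = (2 ^ (k - kceil (Ns s)))%N) ->
  (forall s, #|[set x in Xs F s | #|Fplus F s x| == (2 ^ (k - kceil (Ns s) + 1))%N]|
             = (2 ^ kceil (Ns s) - Ns s)%N) ->
  (forall xh s, (2 ^ size (E xh s))%N = #|Fplus F s (F xh s)|) ->
  irreducible p F -> stationary p F Q ->
  (forall s, smallest_set (Xs F s) (2 * Ns s - 2 ^ kceil (Ns s))%N
                          (Qtilde F Q s) (Xc s)) ->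
  let q := fun s => (Ns s)%:R / (2 ^ k)%N%:R in
  let nus := fun s => nu (Ns s) (Xc s) (Qtilde F Q s) in
  [/\ avg_len p Q E <= entropy p + KLdiv p q + \sum_s p s * (nus s - mu_pi (Ns s)),
      entropy p + KLdiv p q + \sum_s p s * (nus s - mu_pi (Ns s))
        <= entropy p + KLdiv p q + \sum_s p s * nus s,
      (forall s, 0 <= mu_pi (Ns s) :> R /\ mu_pi (Ns s) <= sigma :> R) &
      (forall s, 0 <= nus s /\
         nus s < ((2 * Ns s - 2 ^ kceil (Ns s))%N)%:R / (Ns s)%:R /\
         ((2 * Ns s - 2 ^ kceil (Ns s))%N)%:R / (Ns s)%:R <= 1 :> R)].
Proof.
move=> _ p0 _ _ _ N0 Nsum _ cardXs two_sizes card_big code_len irrF statQ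
  Xc_smallest q nus.
have Q0 := stationary_gt0 p0 irrF statQ.
have [_ [Q1 _]] := statQ.
have Qt1 s : \sum_(x in Xs F s) Qtilde F Q s x = 1 by rewrite sum_Xs_Fplus.
have ks_le_k s : (kceil (Ns s) <= k)%N.
  by apply: up_log_min; rewrite // -Nsum (bigD1 s) //= leq_addr.
have code_s s : \sum_xh Q xh * (size (E xh s))%:R
    <= (k - kceil (Ns s))%N%:R + 1 - \sum_(x in Xc s) Qtilde F Q s x.
  apply: expected_code_len_le (Xc_smallest s) => //; first exact: two_sizes.
  by rewrite card_big cardXs; have := kceil_bounds (N0 s); lia.
have HD : entropy p + KLdiv p q = \sum_s p s * (k%:R - lg (Ns s)%:R).
  rewrite entropyD_KLdiv // => [|s]; last by rewrite divr_gt0 ?ltr0n ?expn_gt0.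
  rewrite -sumrN; apply: eq_bigr => s _.
  by rewrite lg_div ?ltr0n ?expn_gt0 // lg_exp2n; ring.
split.
- rewrite HD -big_split /avg_len exchange_big /=; apply: ler_sum => s _.
  under eq_bigr do rewrite -mulrA.
  rewrite -mulrDr -mulr_sumr ler_pM2l // /nus nu_sub_mu_pi //.
  by apply: le_trans (code_s s) _; rewrite natrB //; lra.
- rewrite lerD2l; apply: ler_sum => s _; rewrite ler_pM2l //.
  by have := (mu_pi_bounds R (N0 s)).1; lra.
- by move=> s; apply: mu_pi_bounds.
move=> s; have [] := nu_bounds (N0 s) (cardXs s) _ (Qt1 s) (Xc_smallest s).
  by move=> x; apply: Qtilde_gt0.
by move=> *; split.
Qed.
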